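(* Let $(k,p,\mathcal{A}_{k,p})$ be one of the following: $k=1,p=3$: $\mathcal{A}_{1,3}=\{3r,3r+1:0\le r\le16\}\setminus\{7,16,24,25,34,43\}$; $k=1,p=5$: $\mathcal{A}_{1,5}=(\{5r,5r+1,5r+2,5r+3:0\le r\le 9\}\cup\{50\})\setminus\{23,48\}$; $k=1,p=7$: $\mathcal{A}_{1,7}=([0,50]\cap\mathbb{Z})\setminus\{6,13,20,27,34,41,47,48\}$; $k=2,p=5$: $\mathcal{A}_{2,5}=(\{5r,5r+1,5r+2:0\le r\le 8\}\cup\{45,50\})\setminus\{21,22\}$; $k=2,p=7$: $\mathcal{A}_{2,7}=([0,50]\cap\mathbb{Z})\setminus(\{7r-1,7r-2:1\le r\le 7\}\cup\{45,46\})$; $k=3,p=5$: $\mathcal{A}_{3,5}=\{0,1,5,6,10,11,15,25,26,30,31,35,36,40,50\}$; $k=3,p=7$: $\mathcal{A}_{3,7}=\{7r,7r+1,7r+2,7r+3:0\le r\le 5\}\cup\{42,49,50\}$; $k=4,p=7$: $\mathcal{A}_{4,7}=\{7r,7r+1,7r+2:0\le r\le 4\}\cup\{35,36,49,50\}$; $k=5,p=7$: $\mathcal{A}_{5,7}=\{0,1,7,8,14,15,21,22,28,49,50\}$. Let $n\ge 2k$ and $a\in\mathcal{A}_{k,p}$. If $p\mid\prod_{i=1}^k(a+n-k+i)$ and $p\nmid a_0a_n$, then $f_{n,a}(x)$ has no factor of degree $k$ in $\mathbb{Q}[x]$. If $p\mid\prod_{i=1}^k(n-k+i)(a+n-k+i)$,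 then $L_n^{(a)}(x)$ has no factor of degree $k$ in $\mathbb{Q}[x]$.
   Context: For integers $n\ge 1$, $a\ge 0$ and integers $a_0,\dots,a_n$, $f_{n,a}(x)=\sum_{j=0}^{n} a_j\frac{x^j}{(j+a)!}$. The generalised Laguerre polynomial is $L_n^{(\alpha)}(x)=\sum_{j=0}^{n}\frac{(n+\alpha)(n-1+\alpha)\cdots(j+1+\alpha)}{(n-j)!\,j!}(-x)^j$. *)

From HB Require Import structures.
From mathcomp Require Import all_boot all_order all_algebra.
Set Implicit Arguments. Unset Strict Implicit. Unset Printing Implicit Defensive.
Import Order.TTheory GRing.Theory Num.Theory.
Local Open Scope ring_scope.

Definition fna (n a : nat) (c : nat -> int) : {poly rat} :=
  \sum_(j < n.+1) (((c j)%:~R / ((j + a)`!)%:R) *: 'X^j).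

Definition laguerre (n a : nat) : {poly rat} :=
  \sum_(j < n.+1)
     (((\prod_(j.+1 <= i < n.+1) (i + a)%:R) / ((n - j)`!)%:R / (j`!)%:R)
        *: ('X ^+ j * (-1) ^+ j)).

Definition has_factor_deg (k : nat) (P : {poly rat}) : Prop :=
  exists g : {poly rat}, size g = k.+1 /\ (g %| P)%R.

Local Open Scope nat_scope.

Definition Aset (k p : nat) : pred nat := fun a =>
  match k, p with
  | 1, 3 => (a \in [seq 3*r | r <- iota 0 17] ++ [seq 3*r+1 | r <- iota 0 17])
            && (a \notin [:: 7; 16; 24; 25; 34; 43])
  | 1, 5 => (a \in [seq 5*r | r <- iota 0 10] ++ [seq 5*r+1 | r <- iota 0 10]
                 ++ [seq 5*r+2 | r <- iota 0 10] ++ [seq 5*r+3 | r <- iota 0 10]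
                 ++ [:: 50])
            && (a \notin [:: 23; 48])
  | 1, 7 => (a <= 50) && (a \notin [:: 6; 13; 20; 27; 34; 41; 47; 48])
  | 2, 5 => (a \in [seq 5*r | r <- iota 0 9] ++ [seq 5*r+1 | r <- iota 0 9]
                 ++ [seq 5*r+2 | r <- iota 0 9] ++ [:: 45; 50])
            && (a \notin [:: 21; 22])
  | 2, 7 => (a <= 50)
            && (a \notin [seq 7*r-1 | r <- iota 1 7] ++ [seq 7*r-2 | r <- iota 1 7]
                         ++ [:: 45; 46])
  | 3, 5 => a \in [:: 0; 1; 5; 6; 10; 11; 15; 25; 26; 30; 31; 35; 36; 40; 50]
  | 3, 7 => a \in [seq 7*r | r <- iota 0 6] ++ [seq 7*r+1 | r <- iota 0 6]
                 ++ [seq 7*r+2 | r <- iota 0 6] ++ [seq 7*r+3 | r <- iota 0 6]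
                 ++ [:: 42; 49; 50]
  | 4, 7 => a \in [seq 7*r | r <- iota 0 5] ++ [seq 7*r+1 | r <- iota 0 5]
                 ++ [seq 7*r+2 | r <- iota 0 5] ++ [:: 35; 36; 49; 50]
  | 5, 7 => a \in [:: 0; 1; 7; 8; 14; 15; 21; 22; 28; 49; 50]
  | _, _ => false
  end.

Definition admissible (k p : nat) : bool :=
  (k, p) \in [:: (1,3); (1,5); (1,7); (2,5); (2,7); (3,5); (3,7); (4,7); (5,7)].

From HB Require Import structures.
From mathcomp Require Import all_boot all_order all_algebra.
From mathcomp Require Import zify ring.
Set Implicit Arguments. Unset Strict Implicit. Unset Printing Implicit Defensive.
Import Order.TTheory GRing.Theory Num.Theory.

(* The proof is Filaseta's p-adic Newton-polygon argument.  The integer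
   polynomial F = (n+a)! f_{n,a} has coefficients c_j (n+a)^_(n-j), and
   n! L_n^{(a)} is the instance c_j = (-1)^j C(n,j).  The criterion
   [newton_no_factor] says that an integer polynomial F has no factor of
   degree k over Q when p does not divide its leading coefficient, p divides
   F_j for j <= deg F - k, and k v_p(F_0) < k v_p(F_t) + t for all t > 0:
   by Gauss's lemma F = h q over Z, an extremal-weight argument shows that p
   does not divide h(0), and then the first coefficient of q prime to p
   yields a low coefficient of F prime to p.  For our F the divisibility
   condition follows from p | (n+a)^_k (resp. p | n^_k (n+a)^_k), and the
   slope condition reduces to k (v_p((t+a)!) - v_p(a!)) < t for t > 0.
   Legendre's bound (p-1) v_p(m!) <= m settles t > k a when k + 1 < p; the
   remaining t are checked by computation for every a in A_{k,p}. *)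

(* v_p(m!) as the sum of the v_p(i), i <= m: a form that is cheap to evaluate. *)
Fixpoint logn_fact_sum p m := if m is m'.+1 then logn p m + logn_fact_sum p m' else 0.

Lemma logn_fact_sumE p m : logn_fact_sum p m = logn p m`!.
Proof.
elim: m => [|m IH] /=; first by rewrite logn1.
by rewrite IH factS lognM // fact_gt0.
Qed.

Lemma legendre_partial p m E : 0 < p ->
  (p - 1) * \sum_(1 <= e < E.+1) m %/ p ^ e + m %/ p ^ E <= m.
Proof.
move=> p_gt0; elim: E => [|E IH]; first by rewrite big_geq // expn0 divn1 muln0.
rewrite big_nat_recr //= expnSr divnMA mulnDr -addnA.
apply: leq_trans IH; rewrite leq_add2l.
by rewrite -mulSnr subn1 prednK // mulnC leq_divM.
Qed.

Lemma legendre_bound p m : prime p -> (p - 1) * logn p m`! <= m.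
Proof.
move=> p_pr; rewrite logn_fact //.
exact: leq_trans (leq_addr _ _) (legendre_partial m m (prime_gt0 p_pr)).
Qed.

Definition slope_ok p k a t := k * (logn p (t + a)`! - logn p a`!) < t.

Definition slope_check p k a :=
  all (fun t => k * (logn_fact_sum p (t + a) - logn_fact_sum p a) < t) (iota 1 (k * a)).

(* When k + 1 < p, Legendre's bound settles every t > k a, so the slope
   inequality holds for all t > 0 as soon as the finite check succeeds. *)
Lemma slope_ok_all p k a : prime p -> k.+1 < p -> slope_check p k a ->
  forall t, 0 < t -> slope_ok p k a t.
Proof.
move=> p_pr kp /allP small t t_gt0; rewrite /slope_ok.
have [t_small | t_large] := leqP t (k * a).
  by have := small t; rewrite mem_iota !logn_fact_sumE; apply; lia.
have := legendre_bound (t + a) p_pr.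
have : logn p (t + a)`! - logn p a`! <= logn p (t + a)`! by apply: leq_subr.
set d := _ - _; set L := logn p _ => d_le_L legL.
have : (p - 1) * (k * d) <= k * (t + a).
  by rewrite mulnCA leq_mul // (leq_trans (leq_mul (leqnn _) d_le_L) legL).
nia.
Qed.

Lemma prod_ffact (b d : nat) : \prod_(0 <= i < d) (i + b).+1 = (b + d) ^_ d.
Proof.
elim: d => [|d IH]; first by rewrite big_geq // ffactn0.
by rewrite big_nat_recr //= IH addnS ffactSS mulnC addnC.
Qed.

Lemma prod_top_ffact (m k : nat) : k <= m -> \prod_(1 <= i < k.+1) (m - k + i) = m ^_ k.
Proof.
move=> km; rewrite big_add1 /= (eq_bigr (fun i => (i + (m - k)).+1)).
  by rewrite prod_ffact subnK.
by move=> i _; rewrite addnS addnC.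
Qed.

Lemma prod_shift_ffact (n a j : nat) : j <= n ->
  \prod_(j.+1 <= i < n.+1) (i + a) = (n + a) ^_ (n - j).
Proof.
move=> jn; rewrite big_add1 /= -{1}[j]add0n big_addn.
rewrite (eq_bigr (fun i => (i + (j + a)).+1)) ?prod_ffact; last first.
  by move=> i _; rewrite addSn addnA.
by rewrite addnAC subnKC.
Qed.

Lemma ffact_dvd (n m m' : nat) : m <= m' -> n ^_ m %| n ^_ m'.
Proof.
elim: m' => [|m' IH]; first by rewrite leqn0 => /eqP ->.
rewrite leq_eqVlt => /orP [/eqP -> // | /IH m_dvd].
by rewrite ffactnSr dvdn_mulr.
Qed.

Lemma fact_split_ffact (n a i : nat) : i <= n -> (n + a)`! = (n + a) ^_ (n - i) * (i + a)`!.
Proof.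
move=> i_le; rewrite -(@ffact_fact (n + a) (n - i)); last by lia.
by congr (_ * _`!); lia.
Qed.

(* C(n,j) (n+a)^_(n-j) = C(n+a, n-j) n^_(n-j): the Laguerre coefficients
   are multiples of both falling factorials. *)
Lemma bin_ffact_swap (n a j : nat) : j <= n ->
  'C(n, j) * (n + a) ^_ (n - j) = 'C(n + a, n - j) * n ^_ (n - j).
Proof.
move=> jn; apply/eqP; rewrite -(eqn_pmul2r (fact_gt0 (n - j))) -(bin_sub jn).
by rewrite -mulnA [(n + a) ^_ _ * _]mulnC mulnA bin_ffact mulnAC bin_ffact mulnC.
Qed.

Lemma last_argmin (P : pred nat) (w : nat -> nat) s :
  (exists i, P i) -> (forall i, P i -> i < s) ->
  exists i, [/\ P i, forall j, P j -> w i <= w j & forall j, i < j -> P j -> w i < w j].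
Proof.
move=> [i0 Pi0] P_lt_s.
pose has_weight m := has (fun j => P j && (w j == m)) (iota 0 s).
have weightP j : P j -> has_weight (w j).
  by move=> Pj; apply/hasP; exists j; rewrite ?mem_iota ?P_lt_s ?Pj ?eqxx.
case: (ex_minnP (ex_intro has_weight _ (weightP i0 Pi0))) => m /hasP[i1 _ Pi1] m_min.
have ex_m : exists i, P i && (w i == m) by exists i1.
have ub_m i : P i && (w i == m) -> i <= s by case/andP=> /P_lt_s/ltnW.
case: (ex_maxnP ex_m ub_m) => i /andP[Pi /eqP wi] i_max.
exists i; split=> // [j Pj | j ij Pj]; first by rewrite wi m_min ?weightP.
rewrite ltn_neqAle wi m_min ?weightP // andbT.
by apply: contraTneq ij => wj; rewrite -leqNgt i_max // Pj wj eqxx.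
Qed.

Local Open Scope ring_scope.

Lemma ndvdz_neq0 (d z : int) : ~~ (d %| z)%Z -> z != 0.
Proof. by apply: contraNneq => ->; rewrite dvdz0. Qed.

Section Valuation.
Variable p : nat.
Hypothesis p_pr : prime p.

(* The p-adic valuation of an integer (with the convention v_p(0) = 0). *)
Definition vz (z : int) : nat := logn p `|z|%N.

Lemma vz_nat (m : nat) : vz m%:Z = logn p m.
Proof. by rewrite /vz absz_nat. Qed.

Lemma dvdz_exp_vz e (z : int) : z != 0 -> ((p ^ e)%:Z %| z)%Z = (e <= vz z)%N.
Proof. by move=> z0; rewrite dvdzE absz_nat pfactor_dvdn // absz_gt0. Qed.

Lemma dvdz_vz (z : int) : z != 0 -> (p%:Z %| z)%Z = (0 < vz z)%N.
Proof. by move=> z0; rewrite -dvdz_exp_vz // expn1. Qed.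

Lemma vz_eq0 (z : int) : ~~ (p%:Z %| z)%Z -> vz z = 0%N.
Proof.
have [-> | z0] := eqVneq z 0; first by rewrite dvdz0.
by rewrite dvdz_vz // lt0n negbK => /eqP.
Qed.

Lemma vzM (z w : int) : z != 0 -> w != 0 -> vz (z * w) = (vz z + vz w)%N.
Proof. by move=> z0 w0; rewrite /vz abszM lognM // absz_gt0. Qed.

Lemma dvdz_exp_mul e (z w : int) : (e <= vz z + vz w)%N -> ((p ^ e)%:Z %| z * w)%Z.
Proof.
have [-> | z0] := eqVneq z 0; first by rewrite mul0r dvdz0.
have [-> | w0] := eqVneq w 0; first by rewrite mulr0 dvdz0.
by rewrite dvdz_exp_vz ?mulf_neq0 // vzM.
Qed.

Lemma coef_mul_ndvd (h q : {poly int}) :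
  ~~ (p%:Z %| h`_0)%Z -> ~~ (p%:Z %| lead_coef q)%Z ->
  exists2 j, (j <= (size q).-1)%N & ~~ (p%:Z %| (h * q)`_j)%Z.
Proof.
move=> h0 lq.
have ex_j : exists j, ~~ (p%:Z %| q`_j)%Z by exists (size q).-1; rewrite -lead_coefE.
case: (ex_minnP ex_j) => j qj j_min; exists j; first by rewrite j_min -?lead_coefE.
rewrite coefM big_ord_recl /= subn0 rpredDr.
  by rewrite dvdzE abszM Euclid_dvdM // -!dvdzE negb_or h0.
apply: rpred_sum => -[i /= i_le] _; apply: dvdz_mull; apply/negPn/negP.
by move/j_min; rewrite /bump /=; lia.
Qed.

End Valuation.

Section NewtonCriterion.
Variables (p k : nat).
Hypotheses (p_pr : prime p) (k_gt0 : (0 < k)%N).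

(* The weight k v_p(P_i) + i of a coefficient: a minimal weight marks a
   vertex of the p-adic Newton polygon at which the slope exceeds 1/k. *)
Definition weight (P : {poly int}) i := (k * vz p P`_i + i)%N.

Definition last_min_weight (P : {poly int}) i :=
  [/\ P`_i != 0, forall j, P`_j != 0 -> (weight P i <= weight P j)%N
    & forall j, (i < j)%N -> P`_j != 0 -> (weight P i < weight P j)%N].

Lemma exists_last_min_weight (P : {poly int}) : P != 0 -> exists i, last_min_weight P i.
Proof.
move=> P0; have ex_nz : exists i, P`_i != 0.
  by exists (size P).-1; rewrite -lead_coefE lead_coef_eq0.
have nz_bound i : P`_i != 0 -> (i < size P)%N.
  by apply: contraTT; rewrite -leqNgt negbK => /(nth_default 0)->.
have [i [Pi i_min i_last]] := last_argmin (weight P) ex_nz nz_bound.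
by exists i; split.
Qed.

(* At the sum of two last minimal-weight indices, the coefficient of h q has
   valuation exactly v_p(h_i) + v_p(q_j): all other terms are divisible by a
   higher power of p. *)
Lemma coef_mul_last_min (h q : {poly int}) i j :
  last_min_weight h i -> last_min_weight q j ->
  ~~ ((p ^ (vz p h`_i + vz p q`_j).+1)%:Z %| (h * q)`_(i + j))%Z.
Proof.
move=> [hi0 h_min h_last] [qj0 q_min q_last].
have i_lt : (i < (i + j).+1)%N by rewrite ltnS leq_addr.
rewrite coefM (bigD1 (Ordinal i_lt)) //= addKn rpredDr.
  by rewrite dvdz_exp_vz ?mulf_neq0 // vzM // ltnn.
apply: rpred_sum => -[l /= l_le] l_ne.
have {}l_ne : l != i by apply: contra l_ne => /eqP l_i; apply/eqP/val_inj.
rewrite ltnS in l_le.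
have [-> | hl0] := eqVneq h`_l 0; first by rewrite mul0r rpred0.
have [-> | ql0] := eqVneq q`_(i + j - l) 0; first by rewrite mulr0 rpred0.
apply: (dvdz_exp_mul p_pr); rewrite -(ltn_pmul2l k_gt0) !mulnDr.
have [i_lt_l | l_lt_i | i_eq_l] := ltngtP i l; last by rewrite i_eq_l eqxx in l_ne.
- have := h_last l i_lt_l hl0; have := q_min _ ql0.
  by rewrite /weight; move: (vz p _) (vz p _) (vz p _) (vz p _) => *; lia.
- have := h_min l hl0; have := q_last (i + j - l)%N _ ql0.
  by rewrite /weight; move: (vz p _) (vz p _) (vz p _) (vz p _) => *; lia.
Qed.

Lemma factor_const_ndvd (h q : {poly int}) :
  size h = k.+1 -> ~~ (p%:Z %| lead_coef h)%Z -> (h * q)`_0 != 0 ->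
  (forall t, (0 < t)%N -> (h * q)`_t != 0 ->
     (k * vz p (h * q)`_0 < k * vz p (h * q)`_t + t)%N) ->
  ~~ (p%:Z %| h`_0)%Z.
Proof.
move=> size_h lead_h F0 slope.
have [h0 q0] : h`_0 != 0 /\ q`_0 != 0 by apply/andP; rewrite -negb_or -mulf_eq0 -coef0M.
have h_nz : h != 0 by apply: contraNneq h0 => ->; rewrite coef0.
have q_nz : q != 0 by apply: contraNneq q0 => ->; rewrite coef0.
have [i hi] := exists_last_min_weight h_nz; have [j qj] := exists_last_min_weight q_nz.
have F_ij := coef_mul_last_min hi qj.
have [_ h_min h_last] := hi; have [_ q_min _] := qj.
have ij0 : (i + j = 0)%N.
  apply/eqP; rewrite -leqn0 leqNgt; apply/negP => ij_gt0.
  have Fij0 := ndvdz_neq0 F_ij.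
  have := slope _ ij_gt0 Fij0; rewrite coef0M vzM //.
  move: F_ij; rewrite dvdz_exp_vz // -leqNgt -(leq_pmul2l k_gt0) => v_ij.
  have := h_min 0%N h0; have := q_min 0%N q0; move: v_ij; rewrite /weight.
  by move: (vz p _) (vz p _) (vz p _) (vz p _) (vz p _) => *; lia.
have lead_k : h`_k = lead_coef h by rewrite lead_coefE size_h.
have := h_last k _ (_ : h`_k != 0); rewrite /weight lead_k (vz_eq0 p_pr lead_h).
rewrite (_ : i = 0%N) ?lead_coef_eq0 //; last by lia.
move=> /(_ k_gt0 h_nz); rewrite muln0 add0n addn0 -{2}[k]muln1 ltn_pmul2l // ltnS.
by rewrite dvdz_vz // -leqNgt.
Qed.

Theorem newton_no_factor (F : {poly int}) :
  ~~ (p%:Z %| lead_coef F)%Z -> F`_0 != 0 ->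
  (forall t, (0 < t)%N -> F`_t != 0 -> (k * vz p F`_0 < k * vz p F`_t + t)%N) ->
  (forall j, (j <= size F - k.+1)%N -> (p%:Z %| F`_j)%Z) ->
  ~ has_factor_deg k (map_poly intr F).
Proof.
move=> lead_F F0 slope low_dvd [g [size_g g_dvd]].
have [h [s s0 gE] [q F_hq]] := dvdpP_rat_int g_dvd.
have size_h : size h = k.+1.
  by move: size_g; rewrite gE size_scale // size_map_inj_poly //; exact: intr_inj.
have q0 : q != 0 by apply: contraNneq F0 => q0; rewrite F_hq q0 mulr0 coef0.
have h0 : h != 0 by rewrite -size_poly_gt0 size_h.
rewrite F_hq lead_coefM in lead_F; subst F.
have lead_h : ~~ (p%:Z %| lead_coef h)%Z by apply: contra lead_F; apply: dvdz_mulr.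
have lead_q : ~~ (p%:Z %| lead_coef q)%Z by apply: contra lead_F; apply: dvdz_mull.
have [j j_le] := coef_mul_ndvd p_pr (factor_const_ndvd size_h lead_h F0 slope) lead_q.
by rewrite low_dvd // size_mul // size_h addSn /= subnS addKn.
Qed.

End NewtonCriterion.

Lemma natr_fact_neq0 (R : numDomainType) m : (m`!)%:R != 0 :> R.
Proof. by rewrite pnatr_eq0 -lt0n fact_gt0. Qed.

Definition fna_int (n a : nat) (c : nat -> int) : {poly int} :=
  \poly_(j < n.+1) (c j * ((n + a) ^_ (n - j))%:Z).

Lemma fna_intE n a c : map_poly intr (fna_int n a c) = ((n + a)`!)%:R *: fna n a c.
Proof.
have -> : fna n a c = \poly_(j < n.+1) ((c j)%:~R / ((j + a)`!)%:R) by rewrite poly_def.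
apply/polyP => i; rewrite coef_map coefZ !coef_poly.
case: ltnP => [i_lt | _]; last by rewrite mulr0.
rewrite ltnS in i_lt.
rewrite (fact_split_ffact a i_lt) /= intrM -pmulrn natrM.
by field; rewrite natr_fact_neq0.
Qed.

Lemma laguerre_intE n a :
  map_poly intr (fna_int n a (fun j => (-1) ^+ j * ('C(n, j))%:Z)) = (n`!)%:R *: laguerre n a.
Proof.
have -> : laguerre n a = \poly_(j < n.+1)
    ((\prod_(j.+1 <= i < n.+1) (i + a)%:R) / ((n - j)`!)%:R / (j`!)%:R * (-1) ^+ j).
  rewrite /laguerre poly_def; apply: eq_bigr => j _.
  by rewrite [X in _ *: X]mulrC -polyC1 -polyCN -polyC_exp mul_polyC scalerA.
apply/polyP => i; rewrite coef_map coefZ !coef_poly.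
case: ltnP => [i_lt | _]; last by rewrite mulr0.
rewrite ltnS in i_lt.
rewrite -natr_prod prod_shift_ffact // -(bin_fact i_lt) /=.
rewrite !intrM -!pmulrn !natrM rmorphXn rmorphN1 /=.
by field; rewrite !natr_fact_neq0.
Qed.

Lemma has_factor_degZ k (c : rat) (P : {poly rat}) :
  c != 0 -> has_factor_deg k P -> has_factor_deg k (c *: P).
Proof. by move=> c0 [g [size_g g_dvd]]; exists g; rewrite dvdpZr. Qed.

Section FnaInt.
Variables (p k n a : nat) (c : nat -> int).
Hypotheses (p_pr : prime p) (k_gt0 : (0 < k)%N).
Hypothesis slope : forall t, (0 < t)%N -> slope_ok p k a t.

Lemma ffact_int_neq0 j : (j <= n)%N -> ((n + a) ^_ (n - j))%:Z != 0.
Proof. by move=> j_le; rewrite (_ : 0 = 0%N%:Z) // eqz_nat -lt0n ffact_gt0; lia. Qed.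

Lemma fna_int_slope : ~~ (p%:Z %| c 0%N)%Z ->
  forall t, (0 < t)%N -> (fna_int n a c)`_t != 0 ->
  (k * vz p (fna_int n a c)`_0 < k * vz p (fna_int n a c)`_t + t)%N.
Proof.
move=> c0 t t_gt0; rewrite !coef_poly /=; case: ltnP => t_lt; last by rewrite eqxx.
rewrite ltnS in t_lt.
have logn_split j : (j <= n)%N ->
    (logn p ((n + a) ^_ (n - j)) + logn p (j + a)`! = logn p (n + a)`!)%N.
  move=> j_le; rewrite (fact_split_ffact a j_le) lognM ?fact_gt0 // ffact_gt0; lia.
move=> Ft; have ct : c t != 0 by apply: contraNneq Ft => ->; rewrite mul0r.
rewrite !vzM ?ffact_int_neq0 ?(ndvdz_neq0 c0) // (vz_eq0 p_pr c0) !vz_nat add0n.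
have := slope t_gt0; rewrite /slope_ok.
have := logn_split 0%N (leq0n _); have := logn_split t t_lt; rewrite add0n.
set D0 := logn p (_ ^_ (n - 0)); set Dt := logn p (_ ^_ (n - t)).
set d := (logn p (t + a)`! - _)%N => split_t split_0 slope_t.
have : (k * D0 <= k * (Dt + d))%N by rewrite leq_mul2l /d; lia.
by move: slope_t; lia.
Qed.

Lemma fna_int_no_factor :
  ~~ (p%:Z %| c n)%Z -> ~~ (p%:Z %| c 0%N)%Z ->
  (forall j, (j <= n - k)%N -> (p%:Z %| c j * ((n + a) ^_ (n - j))%:Z)%Z) ->
  ~ has_factor_deg k (map_poly intr (fna_int n a c)).
Proof.
move=> cn c0 low_dvd.
have coef_n : c n * ((n + a) ^_ (n - n))%:Z = c n by rewrite subnn ffactn0 mulr1.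
have cn_neq0 := ndvdz_neq0 cn.
apply: (newton_no_factor p_pr k_gt0).
- by rewrite lead_coef_poly //= coef_n.
- by rewrite coef_poly /= mulf_neq0 ?ffact_int_neq0 ?(ndvdz_neq0 c0).
- exact: fna_int_slope.
- move=> j; rewrite size_poly_eq /= ?coef_n // subSS coef_poly => j_le.
  by rewrite ifT ?low_dvd //; lia.
Qed.

End FnaInt.

Lemma ndvdz_sign p b : (1 < p)%N -> ~~ (p%:Z %| (-1) ^+ b)%Z.
Proof. by move=> p_gt1; rewrite dvdzE abszX /= exp1n dvdn1 neq_ltn p_gt1 orbT. Qed.

Lemma dvdz_ffact p m k l : (k <= l)%N -> (p %| m ^_ k)%N -> (p%:Z %| (m ^_ l)%:Z)%Z.
Proof. by move=> kl /dvdn_trans; rewrite dvdzE absz_nat; apply; apply: ffact_dvd. Qed.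

Local Close Scope ring_scope.

Lemma Aset_bounded k p a : a \in Aset k p -> a <= 50.
Proof.
rewrite unfold_in /Aset.
case: k => [|[|[|[|[|[|k]]]]]] //; case: p => [|[|[|[|[|[|[|[|p]]]]]]]] //;
  try case/andP=> + _; first [by [] | by move: a; apply/allP; vm_compute].
Qed.

Lemma admissible_facts k p : admissible k p ->
  [&& prime p, 0 < k, k.+1 < p &
      all (fun a => (a \in Aset k p) ==> slope_check p k a) (iota 0 51)].
Proof.
pose P kp := [&& prime kp.2, 0 < kp.1, kp.1.+1 < kp.2 &
      all (fun a => (a \in Aset kp.1 kp.2) ==> slope_check kp.2 kp.1 a) (iota 0 51)].
rewrite /admissible => adm; suff : P (k, p) by [].
by move: (k, p) adm; apply/allP; vm_compute.
Qed.

Theorem corollary2p1 (k p n a : nat) (c : nat -> int) :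
  admissible k p ->
  (2 * k <= n)%N ->
  a \in Aset k p ->
  ( (p %| \prod_(1 <= i < k.+1) (a + n - k + i))%N ->
    ~~ (p%:Z %| (c 0%N * c n)%R)%Z ->
    ~ has_factor_deg k (fna n a c) )
  /\
  ( (p %| \prod_(1 <= i < k.+1) ((n - k + i) * (a + n - k + i)))%N ->
    ~ has_factor_deg k (laguerre n a) ).
Proof.
move=> adm le_2k_n a_in; have k_le_n : k <= n by lia.
have /and4P[p_pr k_gt0 k_lt_p /allP checks] := admissible_facts adm.
have slope : forall t, 0 < t -> slope_ok p k a t.
  apply: slope_ok_all => //; apply: (implyP (checks a _) a_in).
  by rewrite mem_iota ltnS (Aset_bounded a_in).
have top_a : \prod_(1 <= i < k.+1) (a + n - k + i) = (n + a) ^_ k.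
  by rewrite addnC prod_top_ffact //; lia.
split.
- rewrite top_a => p_dvd c0n /(has_factor_degZ (natr_fact_neq0 _ (n + a))).
  rewrite -fna_intE; apply: (fna_int_no_factor p_pr k_gt0 slope).
  + by apply: contra c0n; apply: dvdz_mull.
  + by apply: contra c0n; apply: dvdz_mulr.
  + move=> j j_le; have kj : k <= n - j by lia.
    by apply/dvdz_mull/(dvdz_ffact kj).
- rewrite big_split /= top_a prod_top_ffact // Euclid_dvdM // => p_dvd.
  move/(has_factor_degZ (natr_fact_neq0 _ n)); rewrite -laguerre_intE.
  apply: (fna_int_no_factor p_pr k_gt0 slope).
  + by rewrite binn mulr1 ndvdz_sign // prime_gt1.
  + by rewrite bin0 mulr1 ndvdz_sign // prime_gt1.
  + move=> j j_le; rewrite -mulrA; apply: dvdz_mull; rewrite -PoszM.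
    have kj : k <= n - j by lia.
    case/orP: p_dvd => [/(dvdz_ffact kj) | /(dvdz_ffact kj)] p_dvd; last first.
      by rewrite PoszM dvdz_mull.
    by rewrite bin_ffact_swap ?PoszM ?dvdz_mull //; lia.
Qed.
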